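(* Let $(R,\mathfrak m)$ be a Noetherian local ring, $J$ an $\mathfrak m$-primary ideal, and $I=(f_1,\dots,f_r)$ where $f_1,\dots,f_r$ is a filter-regular sequence. Let $p$ be the Hilbert perturbation index of $R/I$ with respect to $J$, and $N=\max\{p,\operatorname{ar}_J(I)+1\}$. Then $\operatorname{gr}_J(R/I)\cong\operatorname{gr}_J(R/I')$ for all ideals $I'=(f_1',\dots,f_r')$ with $f_i'-f_i\in J^N$, $i=1,\dots,r$.
   Context: A sequence is filter-regular if for each $i$, $f_i\notin\mathfrak p$ for every associated prime $\mathfrak p\ne\mathfrak m$ of $R/(f_1,\dots,f_{i-1})$. The Hilbert perturbation index of $R/I$ with respect to $J$ is the least number $p$ such that for every $f_1',\dots,f_r'$ with $f_i'\equiv f_i\bmod J^p$ and $I'=(f_1',\dots,f_r')$, one has $\ell(R/(I+J^n))=\ell(R/(I'+J^n))$ for all $n\ge0$. $\operatorname{ar}_J(I)$ is the least $c$ with $J^n\cap I=J^{n-c}(J^c\cap I)$ for all $n\ge c$. $\operatorname{gr}_J(R/I)=\bigoplus_n(J^n+I)/(J^{n+1}+I)$. *)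

From mathcomp Require Import all_boot all_order all_algebra.
Set Implicit Arguments. Unset Strict Implicit. Unset Printing Implicit Defensive.
Import GRing.Theory.
Local Open Scope ring_scope.

Section Ideals.
Variable R : comNzRingType.

Definition subI (A B : R -> Prop) := forall x, A x -> B x.
Definition eqI (A B : R -> Prop) := forall x, A x <-> B x.
Definition fullI : R -> Prop := fun _ => True.

Definition is_ideal (A : R -> Prop) :=
  [/\ A 0, (forall x y, A x -> A y -> A (x + y)) & (forall a x, A x -> A (a * x))].

Definition idspan (s : seq R) : R -> Prop :=
  fun x => exists c : 'I_(size s) -> R, x = \sum_(i < size s) c i * s`_i.

Definition gen (A : R -> Prop) : R -> Prop :=
  fun x => exists s : seq R, (forall i, (i < size s)%N -> A s`_i) /\ idspan s x.

Definition sumI (A B : R -> Prop) : R -> Prop :=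
  fun x => exists a b, [/\ A a, B b & x = a + b].
Definition capI (A B : R -> Prop) : R -> Prop := fun x => A x /\ B x.
Definition mulI (A B : R -> Prop) : R -> Prop :=
  gen (fun z => exists a b, [/\ A a, B b & z = a * b]).
Definition powI (J : R -> Prop) (n : nat) : R -> Prop := iter n (mulI J) fullI.

Definition proper (A : R -> Prop) := ~ A 1.
Definition maximal_ideal (M : R -> Prop) :=
  [/\ is_ideal M, proper M &
      forall B, is_ideal B -> subI M B -> proper B -> eqI B M].
Definition prime_ideal (P : R -> Prop) :=
  [/\ is_ideal P, proper P & forall x y, P (x * y) -> P x \/ P y].
Definition radical (A : R -> Prop) : R -> Prop := fun x => exists n, A (x ^+ n).

Definition noetherian := forall A, is_ideal A -> exists s, eqI A (idspan s).
Definition local_ring (m : R -> Prop) :=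
  maximal_ideal m /\ forall M, maximal_ideal M -> eqI M m.
Definition m_primary (m J : R -> Prop) := is_ideal J /\ eqI (radical J) m.

(* associated primes of R/K: primes of the form (K : x) = Ann(x mod K) *)
Definition colon (K : R -> Prop) (x : R) : R -> Prop := fun y => K (y * x).
Definition assoc_prime (K P : R -> Prop) :=
  prime_ideal P /\ exists x, eqI P (colon K x).

Definition filter_regular (m : R -> Prop) (f : seq R) :=
  forall i, (i < size f)%N -> forall P, assoc_prime (idspan (take i f)) P ->
    ~ eqI P m -> ~ P f`_i.

(* length of R/K: chains K = c_0 < c_1 < ... < c_n = R of ideals *)
Definition chain_of_length (K : R -> Prop) (n : nat) :=
  exists c : nat -> R -> Prop,
  [/\ eqI (c 0%N) K, eqI (c n) fullI &
      forall i, (i < n)%N -> [/\ is_ideal (c i), subI (c i) (c i.+1) &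
                                 exists x, c i.+1 x /\ ~ c i x]].
Definition length_is (K : R -> Prop) (n : nat) :=
  chain_of_length K n /\ forall k, chain_of_length K k -> (k <= n)%N.
(* ell(R/A) = ell(R/B) in N u {oo} *)
Definition same_length (A B : R -> Prop) :=
  forall n, length_is A n <-> length_is B n.

Definition perturbation_ok (J : R -> Prop) (f : seq R) (q : nat) :=
  forall f' : seq R, size f' = size f ->
  (forall i, (i < size f)%N -> powI J q (f'`_i - f`_i)) ->
  forall n, same_length (sumI (idspan f) (powI J n)) (sumI (idspan f') (powI J n)).
Definition hilbert_perturbation_index (J : R -> Prop) (f : seq R) (p : nat) :=
  perturbation_ok J f p /\ forall q, perturbation_ok J f q -> (p <= q)%N.

Definition AR_ok (J I : R -> Prop) (c : nat) :=
  forall n, (c <= n)%N ->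
    eqI (capI (powI J n) I) (mulI (powI J (n - c)) (capI (powI J c) I)).
Definition ar_index (J I : R -> Prop) (c : nat) :=
  AR_ok J I c /\ forall d, AR_ok J I d -> (c <= d)%N.

(* gr_J(R/A) ~= gr_J(R/B) as graded rings.  The degree-n piece of gr_J(R/A)
   is (J^n + A)/(J^{n+1} + A); phi n acts on representatives. *)
Definition gr_iso (J A B : R -> Prop) :=
  exists phi : nat -> R -> R,
  [/\ (forall n x, sumI (powI J n) A x -> sumI (powI J n) B (phi n x)),
      (forall n x y, sumI (powI J n) A x -> sumI (powI J n) A y ->
         (sumI (powI J n.+1) A (x - y) <->
          sumI (powI J n.+1) B (phi n x - phi n y))),
      (forall n z, sumI (powI J n) B z ->
         exists x, sumI (powI J n) A x /\ sumI (powI J n.+1) B (phi n x - z)),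
      (forall n x y, sumI (powI J n) A x -> sumI (powI J n) A y ->
         sumI (powI J n.+1) B (phi n (x + y) - (phi n x + phi n y))) /\
      (forall k n x y, sumI (powI J k) A x -> sumI (powI J n) A y ->
         sumI (powI J (k + n).+1) B (phi (k + n)%N (x * y) - phi k x * phi n y)) &
      sumI (powI J 1) B (phi 0%N 1 - 1)].

End Ideals.

(** The degree-n piece of gr_J(R/A) is (J^n + A)/(J^{n+1} + A), so gr_J(R/I) and
    gr_J(R/I') agree as soon as J^n ∩ I ⊆ J^{n+1} + I' and J^n ∩ I' ⊆ J^{n+1} + I for
    all n, i.e. I and I' have the same initial ideal in gr_J(R): sending a class to a
    representative in J^n is then a graded ring isomorphism.

    Since f' ≡ f mod J^N we have I ⊆ J^N + I', which gives the first inclusion for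
    n < N; for n ≥ N > c = ar_J(I), Artin–Rees gives
    J^n ∩ I = J^{n-c}(J^c ∩ I) ⊆ J^{n-c}(J^{c+1} + I') ⊆ J^{n+1} + I'.
    The first inclusion yields J^n ∩ (I + J^{n+1}) ⊆ J^n ∩ (I' + J^{n+1}), and an
    element of J^n ∩ I' outside J^{n+1} + I would make this inclusion strict, hence
    ℓ((I + J^n)/(I + J^{n+1})) > ℓ((I' + J^n)/(I' + J^{n+1})).  This contradicts
    N ≥ p, which forces ℓ(R/(I + J^k)) = ℓ(R/(I' + J^k)) for all k; these lengths are
    finite because J is m-primary in a Noetherian ring. *)

From mathcomp Require Import all_boot all_order all_algebra.
From mathcomp Require Import zify ring.
From Stdlib Require Import FunctionalExtensionality PropExtensionality.
From Stdlib Require Import Classical ClassicalEpsilon.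
Set Implicit Arguments. Unset Strict Implicit. Unset Printing Implicit Defensive.
Import GRing.Theory.
Local Open Scope ring_scope.

Section IdealAlgebra.
Variable R : comNzRingType.
Implicit Types (A B C J K : R -> Prop) (s t : seq R).

Lemma eqI_eq A B : eqI A B -> A = B.
Proof.
move=> h; apply: functional_extensionality => x.
by apply: propositional_extensionality; exact: h.
Qed.

Lemma subI_anti A B : subI A B -> subI B A -> A = B.
Proof. by move=> h1 h2; apply: eqI_eq => x; split; [exact: h1 | exact: h2]. Qed.

Lemma subI_trans A B C : subI A B -> subI B C -> subI A C.
Proof. by move=> h1 h2 x /h1 /h2. Qed.

Section IdealFacts.
Variable K : R -> Prop.
Hypothesis hK : is_ideal K.

Lemma ideal0 : K 0. Proof. by case: hK. Qed.
Lemma idealD x y : K x -> K y -> K (x + y). Proof. by case: hK => _ h _; apply: h. Qed.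
Lemma idealM a x : K x -> K (a * x). Proof. by case: hK => _ _ h; apply: h. Qed.
Lemma idealN x : K x -> K (- x). Proof. by move=> h; rewrite -mulN1r; apply: idealM. Qed.
Lemma idealB x y : K x -> K y -> K (x - y).
Proof. by move=> h1 h2; apply: idealD => //; apply: idealN. Qed.

End IdealFacts.
Arguments ideal0 {K}.
Arguments idealD {K} hK {x y}.
Arguments idealM {K} hK a {x}.
Arguments idealN {K} hK {x}.
Arguments idealB {K} hK {x y}.

Lemma fullI_ideal : is_ideal (@fullI R). Proof. by []. Qed.

Lemma idspan_ideal s : is_ideal (idspan s).
Proof.
split.
- by exists (fun _ => 0); rewrite big1 // => i _; rewrite mul0r.
- move=> x y [c ->] [d ->]; exists (fun i => c i + d i).
  by rewrite -big_split; apply: eq_bigr => i _; rewrite mulrDl.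
- move=> a x [c ->]; exists (fun i => a * c i).
  by rewrite mulr_sumr; apply: eq_bigr => i _; rewrite mulrA.
Qed.

Lemma idspan_min s K : is_ideal K -> (forall i, (i < size s)%N -> K s`_i) ->
  subI (idspan s) K.
Proof.
move=> hK hs x [c ->]; apply: (big_ind K); first exact: ideal0.
- by move=> ? ?; apply: idealD.
- by move=> i _; exact: (idealM hK _ (hs _ (ltn_ord i))).
Qed.

Lemma idspan_mem s i : (i < size s)%N -> idspan s s`_i.
Proof.
move=> hi; exists (fun j : 'I_(size s) => if val j == i then 1 else 0).
rewrite (bigD1 (Ordinal hi)) //= eqxx mul1r big1 ?addr0 // => j hj.
by rewrite ifN ?mul0r //; apply: contra hj => /eqP e; apply/eqP; exact: val_inj.
Qed.

Lemma idspan_catl s t : subI (idspan s) (idspan (s ++ t)).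
Proof.
apply: idspan_min; first exact: idspan_ideal.
move=> i hi; have -> : s`_i = (s ++ t)`_i by rewrite nth_cat hi.
by apply: idspan_mem; rewrite size_cat ltn_addr.
Qed.

Lemma idspan_catr s t : subI (idspan t) (idspan (s ++ t)).
Proof.
apply: idspan_min; first exact: idspan_ideal.
move=> i hi; have -> : t`_i = (s ++ t)`_(size s + i).
  by rewrite nth_cat ltnNge leq_addr addKn.
by apply: idspan_mem; rewrite size_cat ltn_add2l.
Qed.

Lemma gen_ideal A : is_ideal (gen A).
Proof.
split.
- by exists [::]; split => //; exact: (ideal0 (idspan_ideal [::])).
- move=> x y [s [hs hx]] [t [ht hy]]; exists (s ++ t); split.
    move=> i; rewrite size_cat nth_cat; case: ifP => [hi _ | /negbT hi hst].
      exact: hs.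
    by apply: ht; rewrite ltn_subLR // leqNgt.
  by apply: (idealD (idspan_ideal _)); [exact: idspan_catl | exact: idspan_catr].
- by move=> a x [s [hs hx]]; exists s; split => //; exact: (idealM (idspan_ideal s)).
Qed.

Lemma gen_min A K : is_ideal K -> subI A K -> subI (gen A) K.
Proof. by move=> hK hA x [s [hs hx]]; apply: idspan_min hK _ x hx => i /hs /hA. Qed.

Lemma gen_sub A : subI A (gen A).
Proof. by move=> y hy; exists [:: y]; split; [case | exact: (@idspan_mem [:: y] 0)]. Qed.

Lemma sumI_ideal A B : is_ideal A -> is_ideal B -> is_ideal (sumI A B).
Proof.
move=> hA hB; split.
- by exists 0, 0; split; rewrite ?addr0 //; apply: ideal0.
- move=> x y [a [b [ha hb ->]]] [a' [b' [ha' hb' ->]]].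
  exists (a + a'), (b + b'); split; [exact: idealD | exact: idealD |].
  by rewrite addrACA.
- move=> r x [a [b [ha hb ->]]]; exists (r * a), (r * b).
  by split; [exact: idealM | exact: idealM | rewrite mulrDr].
Qed.

Lemma sumI_l A B : is_ideal B -> subI A (sumI A B).
Proof. by move=> hB x hx; exists x, 0; split; rewrite ?addr0 //; apply: ideal0. Qed.

Lemma sumI_r A B : is_ideal A -> subI B (sumI A B).
Proof. by move=> hA x hx; exists 0, x; split; rewrite ?add0r //; apply: ideal0. Qed.

Lemma sumI_min A B K : is_ideal K -> subI A K -> subI B K -> subI (sumI A B) K.
Proof. by move=> hK h1 h2 x [a [b [ha hb ->]]]; apply: idealD => //; [apply: h1 | apply: h2]. Qed.

Lemma sumI_mono A B A' B' : subI A A' -> subI B B' -> subI (sumI A B) (sumI A' B').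
Proof. by move=> h1 h2 x [a [b [ha hb ->]]]; exists a, b; split; [apply: h1 | apply: h2 |]. Qed.

Lemma sumIC A B : sumI A B = sumI B A.
Proof. by apply: subI_anti => x [a [b [ha hb ->]]]; exists b, a; split; rewrite // addrC. Qed.

Lemma sumI_idPr A B : is_ideal A -> is_ideal B -> subI A B -> sumI A B = B.
Proof.
move=> hA hB hAB; apply: subI_anti; last exact: sumI_r.
exact: sumI_min hB hAB (fun _ h => h).
Qed.

Lemma sumI_idPl A B : is_ideal A -> is_ideal B -> subI B A -> sumI A B = A.
Proof. by move=> hA hB hBA; rewrite sumIC; apply: sumI_idPr. Qed.

Lemma capI_idPl A B : subI A B -> capI A B = A.
Proof. by move=> h; apply: subI_anti => [x [] | x hx] //; split => //; apply: h. Qed.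

Lemma capI_idPr A B : subI B A -> capI A B = B.
Proof. by move=> h; apply: subI_anti => [x [] | x hx] //; split => //; apply: h. Qed.

Lemma capI_ideal A B : is_ideal A -> is_ideal B -> is_ideal (capI A B).
Proof.
move=> hA hB; split.
- by split; apply: ideal0.
- by move=> x y [? ?] [? ?]; split; apply: idealD.
- by move=> a x [? ?]; split; apply: idealM.
Qed.

Lemma mulI_ideal A B : is_ideal (mulI A B). Proof. exact: gen_ideal. Qed.

Lemma mulI_gen A B a b : A a -> B b -> mulI A B (a * b).
Proof. by move=> ha hb; apply: gen_sub; exists a, b. Qed.

Lemma mulI_min A B K : is_ideal K -> (forall a b, A a -> B b -> K (a * b)) ->
  subI (mulI A B) K.
Proof. by move=> hK h; apply: gen_min => // z [a [b [ha hb ->]]]; apply: h. Qed.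

Lemma mulI_mono A B A' B' : subI A A' -> subI B B' -> subI (mulI A B) (mulI A' B').
Proof.
move=> h1 h2; apply: mulI_min; first exact: mulI_ideal.
by move=> a b ha hb; apply: mulI_gen; [apply: h1 | apply: h2].
Qed.

Lemma mulI_subr A B : is_ideal B -> subI (mulI A B) B.
Proof. by move=> hB; apply: mulI_min => // a b _ hb; apply: idealM. Qed.

Lemma mulI_subl A B : is_ideal A -> subI (mulI A B) A.
Proof. by move=> hA; apply: mulI_min => // a b ha _; rewrite mulrC; apply: idealM. Qed.

Lemma mulIC A B : mulI A B = mulI B A.
Proof.
by apply: subI_anti; apply: mulI_min; try exact: mulI_ideal;
  move=> a b ha hb; rewrite mulrC; apply: mulI_gen.
Qed.

Lemma mulIA_sub A B C : subI (mulI (mulI A B) C) (mulI A (mulI B C)).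
Proof.
pose P z := forall c, C c -> mulI A (mulI B C) (z * c).
have hP : is_ideal P.
  have hABC := mulI_ideal A (mulI B C).
  split.
  - by move=> c _; rewrite mul0r; apply: ideal0.
  - by move=> x y hx hy c hc; rewrite mulrDl; apply: (idealD hABC); [apply: hx | apply: hy].
  - by move=> a x hx c hc; rewrite -mulrA; apply: (idealM hABC); apply: hx.
have hAB : subI (mulI A B) P.
  apply: mulI_min => // a b ha hb c hc; rewrite -mulrA.
  by apply: mulI_gen => //; apply: mulI_gen.
apply: mulI_min; first exact: mulI_ideal.
by move=> z c /hAB hz hc; apply: hz.
Qed.

Lemma mulIA A B C : mulI (mulI A B) C = mulI A (mulI B C).
Proof.
apply: subI_anti; first exact: mulIA_sub.
rewrite mulIC (mulIC B C) [mulI (mulI A B) C]mulIC (mulIC A B).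
exact: mulIA_sub.
Qed.

Lemma mulI_fullI A : is_ideal A -> mulI (@fullI R) A = A.
Proof.
move=> hA; apply: subI_anti; first exact: mulI_subr.
by move=> x hx; rewrite -[x]mul1r; apply: mulI_gen.
Qed.

Lemma mulI_sumIl A B C : is_ideal A -> is_ideal B ->
  subI (mulI (sumI A B) C) (sumI (mulI A C) (mulI B C)).
Proof.
move=> hA hB; apply: mulI_min; first by apply: sumI_ideal; exact: mulI_ideal.
move=> y x [a [b [ha hb ->]]] hx; rewrite mulrDl.
by exists (a * x), (b * x); split => //; apply: mulI_gen.
Qed.

Lemma powI0 J : powI J 0 = @fullI R. Proof. by []. Qed.
Lemma powIS J n : powI J n.+1 = mulI J (powI J n). Proof. by []. Qed.

Lemma powI_ideal J n : is_ideal (powI J n).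
Proof. by case: n => [|n]; [exact: fullI_ideal | exact: mulI_ideal]. Qed.

Lemma powID J a b : powI J (a + b) = mulI (powI J a) (powI J b).
Proof.
elim: a => [|a IH]; first by rewrite add0n powI0 mulI_fullI //; exact: powI_ideal.
by rewrite addSn !powIS IH mulIA.
Qed.

Lemma powI_mul J a b x y : powI J a x -> powI J b y -> powI J (a + b) (x * y).
Proof. by move=> h1 h2; rewrite powID; apply: mulI_gen. Qed.

Lemma powIS_sub J n : is_ideal J -> subI (powI J n.+1) (powI J n).
Proof. by move=> hJ; rewrite powIS; apply: mulI_subr; exact: powI_ideal. Qed.

Lemma powI_anti J m n : is_ideal J -> (m <= n)%N -> subI (powI J n) (powI J m).
Proof.
move=> hJ; elim: n => [|n IH]; first by rewrite leqn0 => /eqP ->.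
rewrite leq_eqVlt => /orP [/eqP -> //|]; rewrite ltnS => /IH h.
by apply: subI_trans h; exact: powIS_sub.
Qed.

Lemma powI_mono A B n : subI A B -> subI (powI A n) (powI B n).
Proof. by move=> h; elim: n => [//|n IH]; rewrite !powIS; apply: mulI_mono. Qed.

End IdealAlgebra.

Section Chains.
Variable R : comNzRingType.
Implicit Types (A B X Y a b d lo hi : R -> Prop).

Lemma strict_subI A B : ~ subI B A -> exists x, B x /\ ~ A x.
Proof.
move=> h; apply: NNPP => hn; apply: h => x hx.
by apply: NNPP => hax; apply: hn; exists x.
Qed.

Definition chainI a b k := exists c : nat -> R -> Prop,
  [/\ c 0%N = a, c k = b, (forall i, (i <= k)%N -> is_ideal (c i)) &
      forall i, (i < k)%N -> subI (c i) (c i.+1) /\ exists x, c i.+1 x /\ ~ c i x].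

Lemma chain_mono (c : nat -> R -> Prop) k :
  (forall i, (i < k)%N -> subI (c i) (c i.+1)) ->
  forall i j, (i <= j <= k)%N -> subI (c i) (c j).
Proof.
move=> h i j /andP [hij hjk]; elim: j hij hjk => [|j IH].
  by rewrite leqn0 => /eqP -> _.
move=> hij hjk; move: hij; rewrite leq_eqVlt ltnS => /orP [/eqP -> //|hij].
by apply: subI_trans (IH hij (ltnW hjk)) _; exact: h.
Qed.

Lemma chainI_subI a b k : chainI a b k -> subI a b.
Proof.
move=> [c [<- <- _ h]]; apply: (@chain_mono c k); last by rewrite leq0n leqnn.
by move=> i /h [].
Qed.

Lemma chainI_ideall a b k : chainI a b k -> is_ideal a.
Proof. by move=> [c [<- _ hi _]]; apply: hi. Qed.

Lemma chainI_idealr a b k : chainI a b k -> is_ideal b.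
Proof. by move=> [c [_ <- hi _]]; apply: hi. Qed.

Lemma chainI0 a : is_ideal a -> chainI a a 0.
Proof. by move=> ha; exists (fun _ => a); split => // i; rewrite leqn0 => /eqP ->. Qed.

Lemma chainI_eq0 a b k : chainI a b k -> subI b a -> k = 0%N.
Proof.
move=> [c [c0 ck hi h]] hba; case: k ck hi h => [//|k] ck hi h.
have [_ [x [hx1 hx0]]] := h 0%N isT.
have hm : forall i, (i < k.+1)%N -> subI (c i) (c i.+1) by move=> i /h [].
exfalso; apply: hx0; rewrite c0; apply: hba; rewrite -ck.
by apply: (chain_mono hm) hx1; rewrite leqnn.
Qed.

Lemma chainI1 a b : is_ideal a -> is_ideal b -> subI a b -> ~ subI b a -> chainI a b 1.
Proof.
move=> ha hb hab /strict_subI [x [hx1 hx0]].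
exists (fun i => if i is 0%N then a else b); split => //; first by case.
by case=> // _; split => //; exists x.
Qed.

Lemma chainI_cat a b d k l : chainI a b k -> chainI b d l -> chainI a d (k + l).
Proof.
move=> [c [c0 ck ci cs]] [c' [c'0 c'l c'i c's]].
exists (fun i => if (i <= k)%N then c i else c' (i - k)%N); split.
- by rewrite leq0n.
- case: l c'l c'i c's => [|l] c'l c'i c's; first by rewrite addn0 leqnn ck -c'l c'0.
  by rewrite -[X in (_ <= X)%N]addn0 leq_add2l /= addKn.
- move=> i hi; case: ifP => hik; first exact: ci.
  by apply: c'i; rewrite leq_subLR.
- move=> i hi; case: (ltnP i k) => hik; first by rewrite (ltnW hik); apply: cs.
  case: (leqP i k) => hik2.
    have -> : i = k by apply/eqP; rewrite eqn_leq hik2.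
    by rewrite subSnn ck -c'0; apply: c's; move: hi; lia.
  by rewrite subSn //; apply: c's; move: hi; lia.
Qed.

Lemma chainI_grow_r a b b' k : chainI a b k -> is_ideal b' -> subI b b' ->
  exists2 k', (k <= k')%N & chainI a b' k'.
Proof.
move=> h hb' hbb'; case: (classic (subI b' b)) => hb'b.
  by exists k; rewrite // (subI_anti hb'b hbb').
exists (k + 1)%N; first exact: leq_addr.
by apply: (chainI_cat h); apply: chainI1 => //; exact: chainI_idealr h.
Qed.

Lemma chainI_grow_l a a' b k : chainI a b k -> is_ideal a' -> subI a' a ->
  exists2 k', (k <= k')%N & chainI a' b k'.
Proof.
move=> h ha' ha'a; case: (classic (subI a a')) => haa'.
  by exists k; rewrite // (subI_anti ha'a haa').
exists (1 + k)%N; first exact: leq_addl.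
by apply: (chainI_cat _ h); apply: chainI1 => //; exact: chainI_ideall h.
Qed.

Lemma chainI_sumI lo hi B k : chainI lo hi k -> is_ideal B -> subI (capI hi B) lo ->
  chainI (sumI lo B) (sumI hi B) k.
Proof.
move=> [c [c0 ck ci cs]] hB hcap.
have mono := @chain_mono c k (fun i hh => proj1 (cs i hh)).
exists (fun i => sumI (c i) B); split; rewrite ?c0 ?ck //.
- by move=> i hik; apply: sumI_ideal => //; apply: ci.
- move=> i hik; have [hs [x [hx1 hx0]]] := cs i hik; split; first exact: sumI_mono.
  exists x; split; first exact: sumI_l.
  move=> [u [w [hu hw ex]]]; apply: hx0.
  have hwhi : hi w.
    have -> : w = x - u by rewrite ex addrC addKr.
    rewrite -ck; apply: (idealB (ci k (leqnn k))).
      by apply: (mono i.+1) => //; rewrite hik leqnn.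
    by apply: (mono i) => //; rewrite ltnW // leqnn.
  have hwlo : c 0%N w by rewrite c0; apply: hcap.
  rewrite ex; apply: (idealD (ci i (ltnW hik))) => //.
  by apply: (mono 0%N) hwlo; rewrite leq0n ltnW.
Qed.

Lemma chainI_capI lo hi B k : chainI lo hi k -> is_ideal B -> subI hi (sumI lo B) ->
  chainI (capI lo B) (capI hi B) k.
Proof.
move=> [c [c0 ck ci cs]] hB hsum.
have mono := @chain_mono c k (fun i hh => proj1 (cs i hh)).
exists (fun i => capI (c i) B); split; rewrite ?c0 ?ck //.
- by move=> i hik; apply: capI_ideal => //; apply: ci.
- move=> i hik; have [hs [x [hx1 hx0]]] := cs i hik.
  split; first by move=> y [h1 h2]; split => //; apply: hs.
  have hxhi : hi x by rewrite -ck; apply: (mono i.+1) => //; rewrite hik leqnn.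
  have [u [w [hu hw ex]]] := hsum x hxhi.
  have hulo j : (j <= k)%N -> c j u.
    by move=> hj; rewrite -c0 in hu; apply: (mono 0%N) hu; rewrite leq0n.
  exists w; split.
    split => //; have -> : w = x - u by rewrite ex addrC addKr.
    by apply: (idealB (ci i.+1 hik)) => //; exact: hulo.
  move=> [hwi _]; apply: hx0; rewrite ex; apply: (idealD (ci i (ltnW hik))) => //.
  by apply: hulo; rewrite ltnW.
Qed.

Lemma chainI_last a d k : chainI a d k.+1 -> exists2 x, chainI a x k & chainI x d 1.
Proof.
move=> [c [c0 ck ci cs]]; exists (c k).
  by exists c; split => // i hi; [apply: ci; exact: leqW | apply: cs; exact: ltnW].
have [hs [x [hx1 hx0]]] := cs k (ltnSn k); rewrite ck in hs hx1.
apply: chainI1 => //; [exact: ci | by rewrite -ck; exact: ci | by move/(_ x hx1)].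
Qed.

Lemma chainI_split a b d k : chainI a d k -> is_ideal b -> subI a b -> subI b d ->
  exists k1 k2, [/\ (k <= k1 + k2)%N, chainI a b k1 & chainI b d k2].
Proof.
elim: k b d => [|k IH] b d.
  move=> hc hb hab hbd; have ead : a = d by case: hc => c [<- <- _ _].
  subst d; rewrite (subI_anti hbd hab).
  by exists 0%N, 0%N; split => //; apply: chainI0.
case/chainI_last => x hax hxd hb hab hbd.
have hx := chainI_idealr hax; have hd := chainI_idealr hxd.
have hbx : is_ideal (capI b x) by apply: capI_ideal.
have [k1 [k2 [hk h1 h2]]] := IH (capI b x) x hax hbx
  (fun y hy => conj (hab y hy) (chainI_subI hax hy)) (fun y hy => proj2 hy).
have h2b : chainI b (sumI x b) k2.
  have := chainI_sumI h2 hb (fun y hy => conj (proj2 hy) (proj1 hy)).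
  by rewrite sumI_idPr // => y [].
case: (classic (subI b x)) => hbx'.
  rewrite capI_idPl // in h1; rewrite sumI_idPl // in h2b.
  exists k1, (k2 + 1)%N; split => //; last exact: chainI_cat h2b hxd.
  by rewrite addnA addn1.
have h1b : chainI a b (k1 + 1).
  apply: (chainI_cat h1); apply: chainI1 => //; first by move=> y [].
  by move=> h; apply: hbx' => y /h [].
have [k2' hk2 h2d] := chainI_grow_r h2b hd (sumI_min hd (chainI_subI hxd) hbd).
by exists (k1 + 1)%N, k2'; split => //; lia.
Qed.

Definition no_ideal_between a' a :=
  forall X, is_ideal X -> subI a' X -> subI X a -> ~ subI X a' -> subI a X.

Lemma chainI_no_ideal_between a' a k : chainI a' a k -> no_ideal_between a' a ->
  (k <= 1)%N.
Proof.
move=> [c [c0 ck ci cs]] hnb; rewrite leqNgt; apply/negP => hk.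
have mono := @chain_mono c k (fun i hh => proj1 (cs i hh)).
have [_ [x [hx1 hx0]]] := cs 0%N ltac:(lia).
have [_ [y [hy2 hy1]]] := cs 1%N hk.
apply: hy1; apply: (hnb (c 1%N)).
- by apply: ci; lia.
- by rewrite -c0; apply: mono; lia.
- by rewrite -ck; apply: mono; lia.
- by move=> h; apply: hx0; rewrite c0; apply: h.
- by rewrite -ck; apply: (mono 2%N) => //; lia.
Qed.

Lemma chain_of_lengthE K n : is_ideal K -> chain_of_length K n <-> chainI K (@fullI R) n.
Proof.
move=> hK; split.
- move=> [c [c0 cn cs]]; exists c; split; [exact: eqI_eq | exact: eqI_eq | |].
  + move=> i; rewrite leq_eqVlt => /orP [/eqP ->|hi]; first by rewrite (eqI_eq cn).
    by case: (cs i hi).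
  + by move=> i hi; case: (cs i hi).
- move=> [c [c0 cn ci cs]]; exists c; split; [by rewrite c0 | by rewrite cn |].
  by move=> i hi; have [h1 h2] := cs i hi; split => //; apply: ci; rewrite ltnW.
Qed.

Lemma length_chainI_le X Y n n0 k : is_ideal Y -> length_is X n -> length_is Y n0 ->
  chainI X Y k -> (k + n0 <= n)%N.
Proof.
move=> hY [_ hXmax] [hYc _] hXY; apply: hXmax.
apply/(chain_of_lengthE _ (chainI_ideall hXY)).
exact: chainI_cat hXY ((chain_of_lengthE _ hY).1 hYc).
Qed.

Lemma length_chainI_ge X Y n n0 : is_ideal X -> is_ideal Y -> subI X Y ->
  length_is X n -> length_is Y n0 -> exists2 k, (n <= k + n0)%N & chainI X Y k.
Proof.
move=> hX hY hXY [hXc _] [_ hYmax].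
have [k1 [k2 [hk h1 h2]]] :=
  chainI_split ((chain_of_lengthE _ hX).1 hXc) hY hXY (fun _ _ => I).
have : (k2 <= n0)%N by apply/hYmax/(chain_of_lengthE _ hY).
by exists k1 => //; lia.
Qed.

End Chains.

Section FiniteLength.
Variable R : comNzRingType.
Implicit Types (A B J K X a b m : R -> Prop) (s : seq R).

Definition principal (y : R) : R -> Prop := fun x => exists t, x = t * y.

Lemma principal_ideal y : is_ideal (principal y).
Proof.
split.
- by exists 0; rewrite mul0r.
- by move=> ? ? [t ->] [t' ->]; exists (t + t'); rewrite mulrDl.
- by move=> a ? [t ->]; exists (a * t); rewrite mulrA.
Qed.

Lemma principal_mem y : principal y y. Proof. by exists 1; rewrite mul1r. Qed.

Lemma principal_min y K : is_ideal K -> K y -> subI (principal y) K.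
Proof. by move=> hK hy x [t ->]; apply: (idealM hK). Qed.

Lemma maximal_inv_mod m r : maximal_ideal m -> ~ m r ->
  exists u t, m u /\ 1 = u + t * r.
Proof.
move=> [hm hpm hmax] hr; have hr' := principal_ideal r.
have hB := sumI_ideal hm hr'.
case: (classic (sumI m (principal r) 1)) => [[u [v [hu [t ->] e]]] | hn].
  by exists u, t.
have [hBm _] := hmax _ hB (sumI_l hr') hn r.
by exfalso; apply/hr/hBm/(sumI_r hm); exact: principal_mem.
Qed.

Lemma idspan_nil (x : R) : idspan [::] x -> x = 0.
Proof. by move=> [c ->]; rewrite big_ord0. Qed.

Lemma idspan_cons y s x : idspan (y :: s) x -> exists r w, idspan s w /\ x = r * y + w.
Proof.
move=> [c ->]; rewrite big_ord_recl /=.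
exists (c ord0), (\sum_(i < size s) c (lift ord0 i) * s`_i); split => //.
by exists (fun i => c (lift ord0 i)).
Qed.

(* a/a' is generated by the class of y, which m kills, so it is a quotient of R/m. *)
Lemma no_ideal_between_cons m b a y s : maximal_ideal m -> is_ideal b -> is_ideal a ->
  (forall u, m u -> b (u * y)) -> subI a (sumI b (idspan (y :: s))) ->
  no_ideal_between (capI (sumI b (idspan s)) a) a.
Proof.
move=> hmax hb ha hmy has X hX ha'X hXa /strict_subI [z [hzX hza']].
have [beta [w0 [hbeta /idspan_cons [r [w [hw er]]] ez]]] := has z (hXa z hzX).
have hr : ~ m r.
  move=> hr; apply: hza'; split; last exact: hXa.
  exists (beta + r * y), w; split => //; first by apply: (idealD hb) => //; apply: hmy.
  by rewrite ez er addrA.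
have [u [t [hu e1]]] := maximal_inv_mod hmax hr.
move=> z2 hz2.
have [beta2 [w02 [hbeta2 /idspan_cons [r2 [w2 [hw2 er2]]] ez2]]] := has z2 hz2.
have hsI := idspan_ideal s.
have hq : capI (sumI b (idspan s)) a (z2 - r2 * t * z).
  split; last by apply: (idealB ha) => //; apply: (idealM ha); apply: hXa.
  exists (beta2 + r2 * (u * y) - r2 * t * beta), (w2 - r2 * t * w); split.
  - apply: (idealB hb); last exact: (idealM hb).
    by apply: (idealD hb) => //; apply: (idealM hb); apply: hmy.
  - by apply: (idealB hsI) => //; apply: (idealM hsI).
  - rewrite ez2 er2 ez er.
    have -> : u = 1 - t * r by rewrite e1 addrK.
    ring.
rewrite -(subrK (r2 * t * z) z2); apply: (idealD hX); first exact: ha'X.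
exact: (idealM hX).
Qed.

Lemma chainI_le_size m s b a k : maximal_ideal m -> is_ideal b -> is_ideal a ->
  subI b a -> (forall i u, (i < size s)%N -> m u -> b (u * s`_i)) ->
  subI a (sumI b (idspan s)) -> chainI b a k -> (k <= size s)%N.
Proof.
move=> hmax hb; elim: s a k => [|y s IH] a k ha hba hm has hc.
  suff -> : k = 0%N by [].
  by apply: (chainI_eq0 hc) => x /has [u [w [hu /idspan_nil -> ->]]]; rewrite addr0.
pose a' := capI (sumI b (idspan s)) a.
have hsI : is_ideal (sumI b (idspan s)) by apply: sumI_ideal => //; exact: idspan_ideal.
have ha' : is_ideal a' by apply: capI_ideal.
have hba' : subI b a' by move=> x hx; split; [exact: (sumI_l (idspan_ideal s)) | exact: hba].
have [k1 [k2 [hk h1 h2]]] := chainI_split hc ha' hba' (fun x => @proj2 _ _).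
have hk1 : (k1 <= size s)%N.
  apply: IH h1 => //; first by move=> i u hi hu; apply: (hm i.+1 u).
  by move=> x [].
have hk2 : (k2 <= 1)%N.
  apply: (chainI_no_ideal_between h2); apply: no_ideal_between_cons hmax hb ha _ has.
  by move=> u; apply: (hm 0%N).
by rewrite /=; lia.
Qed.

Lemma powI_chainI_bounded m t : noetherian R -> maximal_ideal m ->
  exists Bd, forall k, chainI (powI m t) (@fullI R) k -> (k <= Bd)%N.
Proof.
move=> hN hmax; have hm : is_ideal m by case: hmax.
elim: t => [|t [Bd IH]]; first by exists 0%N => k hk; rewrite (chainI_eq0 hk).
have [s /eqI_eq es] := hN _ (powI_ideal m t).
exists (size s + Bd)%N => k hk.
have [k1 [k2 [hk' h1 h2]]] :=
  chainI_split hk (powI_ideal m t) (powIS_sub (n:=t) hm) (fun _ _ => I).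
have hk1 : (k1 <= size s)%N.
  apply: (chainI_le_size hmax (powI_ideal m t.+1) (powI_ideal m t) (powIS_sub (n:=t) hm) _ _ h1).
  - by move=> i u hi hu; rewrite powIS; apply: mulI_gen => //; rewrite es; apply: idspan_mem.
  - by move=> x hx; apply: sumI_r; [exact: powI_ideal | rewrite -es].
by have := IH _ h2; lia.
Qed.

Lemma powI_sumI_sub A B n p q : is_ideal A -> is_ideal B -> (p + q = n)%N ->
  subI (powI (sumI A B) n) (sumI (powI A p) (powI B q)).
Proof.
move=> hA hB; elim: n p q => [|n IH] p q hpq.
  by case: p q hpq => [|?] [|?] // _ x _; apply: (sumI_l (powI_ideal B 0)).
case: p hpq => [|p] hpq; first by move=> x _; apply: (sumI_l (powI_ideal B q)).
case: q hpq => [|q] hpq; first by move=> x _; apply: (sumI_r (powI_ideal A p.+1)).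
have hS : is_ideal (sumI (powI A p.+1) (powI B q.+1)) by apply: sumI_ideal; exact: powI_ideal.
rewrite powIS; apply: subI_trans (mulI_sumIl (C:=powI (sumI A B) n) hA hB) _.
apply: sumI_min => //.
- apply: subI_trans (mulI_mono (fun x (h : A x) => h) (IH p q.+1 _)) _; first lia.
  apply: mulI_min => // a x ha [u [v [hu hv ->]]].
  rewrite mulrDr; exists (a * u), (a * v); split => //; first exact: mulI_gen.
  exact: (idealM (powI_ideal B q.+1)).
- apply: subI_trans (mulI_mono (fun x (h : B x) => h) (IH p.+1 q _)) _; first lia.
  apply: mulI_min => // a x ha [u [v [hu hv ->]]].
  rewrite mulrDr; exists (a * u), (a * v); split => //; last exact: mulI_gen.
  exact: (idealM (powI_ideal A p.+1)).
Qed.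

Lemma powI_principal y e : subI (powI (principal y) e) (principal (y ^+ e)).
Proof.
elim: e => [|e IH]; first by move=> x _; exists x; rewrite expr0 mulr1.
rewrite powIS; apply: subI_trans (mulI_mono (fun x (h : principal y x) => h) IH) _.
apply: mulI_min; first exact: principal_ideal.
by move=> a b [t ->] [t' ->]; exists (t * t'); rewrite exprS; ring.
Qed.

Lemma powI_idspan_sub J s : is_ideal J ->
  (forall i, (i < size s)%N -> exists e, J (s`_i ^+ e)) ->
  exists T, subI (powI (idspan s) T) J.
Proof.
move=> hJ; elim: s => [|y s IH] hs.
  exists 1%N; rewrite powIS; apply: subI_trans (mulI_subl (B:=powI (idspan [::]) 0) (idspan_ideal [::])) _.
  by move=> x /idspan_nil ->; apply: ideal0.
have [T hT] := IH (fun i => hs i.+1); have [e he] := hs 0%N isT.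
exists (e + T)%N.
have hcons : subI (idspan (y :: s)) (sumI (principal y) (idspan s)).
  by move=> x /idspan_cons [r [w [hw ->]]]; exists (r * y), w; split => //; exists r.
apply: subI_trans (powI_mono (n:=e + T) hcons) _.
apply: subI_trans (powI_sumI_sub (principal_ideal y) (idspan_ideal s) (erefl _)) _.
apply: sumI_min => //; apply: subI_trans (@powI_principal y e) _.
exact: principal_min.
Qed.

Lemma primary_powI_sub m J : noetherian R -> is_ideal m -> m_primary m J ->
  exists T, forall k, subI (powI m (T * k)) (powI J k).
Proof.
move=> hN hm [hJ /eqI_eq er]; have [s /eqI_eq es] := hN _ hm.
have [T hT] : exists T, subI (powI (idspan s) T) J.
  apply: powI_idspan_sub => // i hi.
  by have : radical J s`_i by rewrite er es; apply: idspan_mem.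
exists T; elim=> [|k IH]; first by rewrite muln0.
by rewrite mulnS powID powIS; apply: mulI_mono; rewrite // es.
Qed.

Lemma bounded_ex_max (P : nat -> Prop) l0 Bd : P l0 -> (forall l, P l -> (l <= Bd)%N) ->
  exists n, P n /\ forall l, P l -> (l <= n)%N.
Proof.
move=> hl0 hB; apply: NNPP => hn.
have hup n : P n -> exists l, P l /\ (n < l)%N.
  move=> pn; apply: NNPP => hn2; apply: hn; exists n; split => // l pl.
  by rewrite leqNgt; apply/negP => hlt; apply: hn2; exists l.
have hge j : exists l, P l /\ (j <= l)%N.
  elim: j => [|j [l [pl hjl]]]; first by exists l0.
  by have [l' [pl' hll']] := hup l pl; exists l'; split => //; lia.
by have [l [pl hl]] := hge Bd.+1; have := hB l pl; lia.
Qed.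

Lemma finite_length m J K k : noetherian R -> maximal_ideal m -> m_primary m J ->
  is_ideal K -> subI (powI J k) K -> exists n, length_is K n.
Proof.
move=> hN hmax hprim hK hJK; have hm : is_ideal m by case: hmax.
have [T hT] := primary_powI_sub hN hm hprim.
have [Bd hB] := powI_chainI_bounded (T * k) hN hmax.
have hmK : subI (powI m (T * k)) K := subI_trans (hT k) hJK.
have bnd l : chainI K (@fullI R) l -> (l <= Bd)%N.
  move=> hl; have [l' hll' hl'] := chainI_grow_l hl (powI_ideal m (T * k)) hmK.
  exact: leq_trans hll' (hB _ hl').
have [l0 _ hl0] := chainI_grow_r (chainI0 hK) (@fullI_ideal R) (fun _ _ => I).
have [n [pn hn]] := bounded_ex_max hl0 bnd.
by exists n; split => [|l /(chain_of_lengthE _ hK) /hn]; first exact/chain_of_lengthE.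
Qed.

End FiniteLength.

Section Perturbation.
Variable R : comNzRingType.
Implicit Types (A B I K X : R -> Prop) (s t : seq R).

Lemma idspan_perturb K s t : is_ideal K -> size t = size s ->
  (forall i, (i < size s)%N -> K (t`_i - s`_i)) -> subI (idspan s) (sumI K (idspan t)).
Proof.
move=> hK hts hd x [c ->]; have ht := idspan_ideal t.
exists (\sum_(i < size s) c i * (s`_i - t`_i)), (\sum_(i < size s) c i * t`_i); split.
- apply: (big_ind K); [exact: ideal0 | by move=> ? ?; apply: idealD |].
  by move=> i _; apply: (idealM hK); rewrite -opprB; apply: (idealN hK); exact: hd.
- apply: (big_ind (idspan t)); [exact: ideal0 | by move=> ? ?; apply: idealD |].
  by move=> i _; apply: (idealM ht); apply: idspan_mem; rewrite hts.
- by rewrite -big_split; apply: eq_bigr => i _ /=; rewrite -mulrDr subrK.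
Qed.

Lemma sumI_shift X K d e : is_ideal X -> is_ideal K -> K e ->
  sumI X K (d + e) <-> sumI X K d.
Proof.
move=> hX hK he; have hS := sumI_ideal hX hK; have hse : sumI X K e by apply: sumI_r.
by split => h; [rewrite -(addrK e d); apply: (idealB hS) | apply: (idealD hS)].
Qed.

Variable J : R -> Prop.
Hypothesis hJ : is_ideal J.

(* The degree-n initial forms of A in gr_J(R) are initial forms of B. *)
Definition leading_subI A B :=
  forall n, subI (capI (powI J n) A) (sumI (powI J n.+1) B).

Lemma leading_subI_transfer A B n d : is_ideal A -> is_ideal B -> leading_subI A B ->
  powI J n d -> sumI (powI J n.+1) A d -> sumI (powI J n.+1) B d.
Proof.
move=> hA hB hAB hd [j [a [hj ha e]]]; subst d.
have : capI (powI J n) A a.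
  split => //; have -> : a = (j + a) - j by rewrite addrC addKr.
  by apply: (idealB (powI_ideal J n)) => //; exact: powIS_sub.
move=> /hAB [j2 [b [hj2 hb ->]]]; exists (j + j2), b; split => //.
  exact: (idealD (powI_ideal J n.+1)).
by rewrite addrA.
Qed.

Lemma leading_subI_AR I I' c N : is_ideal I' -> AR_ok J I c -> (c < N)%N ->
  subI I (sumI (powI J N) I') -> leading_subI I I'.
Proof.
move=> hI' har hcN hII' n.
have hsub k : (k <= N)%N -> subI I (sumI (powI J k) I').
  by move=> hk; apply: subI_trans hII' (sumI_mono (powI_anti hJ hk) (fun _ h => h)).
case: (ltnP n N) => hn; first by move=> x [_ /(hsub _ hn)].
have hS := sumI_ideal (powI_ideal J n.+1) hI'.
rewrite (eqI_eq (har n (ltnW (leq_trans hcN hn)))).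
apply: mulI_min => // a b ha [_ /(hsub _ hcN) [j [i' [hj hi' ->]]]].
rewrite mulrDr; exists (a * j), (a * i'); split => //; last exact: (idealM hI').
have -> : n.+1 = (n - c + c.+1)%N by lia.
exact: powI_mul.
Qed.

Lemma sumI_capI_modular I K (K' : R -> Prop) : is_ideal I -> is_ideal K' -> subI K' K ->
  sumI (capI (sumI I K') K) I = sumI I K'.
Proof.
move=> hI hK' hK'K; have hIK' := sumI_ideal hI hK'; apply: subI_anti.
  by apply: sumI_min => // [x [] // | ]; exact: sumI_l.
move=> x [i [k' [hi hk' ->]]]; exists k', i; split; rewrite 1?addrC //.
by split; [exact: sumI_r | exact: hK'K].
Qed.

Lemma chainI_sumI_capI I K (K' : R -> Prop) k : is_ideal I -> is_ideal K' -> is_ideal K ->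
  subI K' K ->
  chainI (sumI I K') (sumI I K) k <-> chainI (capI (sumI I K') K) K k.
Proof.
move=> hI hK' hK hK'K; split => h.
  have := chainI_capI h hK (sumI_mono (sumI_l hK') (fun _ h => h)).
  by rewrite [capI (sumI I K) K]capI_idPr //; exact: sumI_r.
have hcap : subI (capI K I) (capI (sumI I K') K).
  by move=> x [hxK hxI]; split; [exact: sumI_l | exact: hxK].
have := chainI_sumI h hI hcap.
by rewrite sumI_capI_modular // [sumI K I]sumIC.
Qed.

Lemma leading_subI_of_length I (I' : R -> Prop) : is_ideal I -> is_ideal I' ->
  (forall k, exists n, length_is (sumI I (powI J k)) n) ->
  (forall k, same_length (sumI I (powI J k)) (sumI I' (powI J k))) ->
  leading_subI I I' -> leading_subI I' I.
Proof.
move=> hI hI' hfin hsame hII' n x [hxn hxI']; apply: NNPP => hx.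
have hJn := powI_ideal J n; have hJn1 := powI_ideal J n.+1.
have hJJ := powIS_sub (n:=n) hJ.
have [a ha] := hfin n.+1; have [a0 ha0] := hfin n.
have [k hk hB] := length_chainI_ge (sumI_ideal hI' hJn1) (sumI_ideal hI' hJn)
  (sumI_mono (fun _ h => h) hJJ) ((hsame _ a).1 ha) ((hsame _ a0).1 ha0).
have hLL' : subI (capI (sumI I (powI J n.+1)) (powI J n))
                 (capI (sumI I' (powI J n.+1)) (powI J n)).
  move=> y [hy hyn]; split => //; rewrite sumIC.
  by apply: leading_subI_transfer hII' hyn _; rewrite // sumIC.
have hstrict : ~ subI (capI (sumI I' (powI J n.+1)) (powI J n))
                      (capI (sumI I (powI J n.+1)) (powI J n)).
  move=> h; apply: hx; rewrite sumIC; apply: (proj1 (h x _)).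
  by split => //; exact: sumI_l.
have hA : chainI (capI (sumI I (powI J n.+1)) (powI J n)) (powI J n) (1 + k).
  apply: chainI_cat ((chainI_sumI_capI _ hI' hJn1 hJn hJJ).1 hB).
  by apply: chainI1 => //; apply: capI_ideal => //; apply: sumI_ideal.
have := length_chainI_le (sumI_ideal hI hJn) ha ha0
  ((chainI_sumI_capI _ hI hJn1 hJn hJJ).2 hA).
by lia.
Qed.

End Perturbation.

Section GradedIso.
Variable R : comNzRingType.
Variables J A B : R -> Prop.
Hypotheses (hJ : is_ideal J) (hA : is_ideal A) (hB : is_ideal B).
Hypotheses (hAB : leading_subI J A B) (hBA : leading_subI J B A).

(* For x in J^n + A, a representative of x modulo A lying in J^n (junk otherwise). *)
Definition rep n x := epsilon (inhabits (0 : R)) (fun a => powI J n a /\ A (x - a)).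

Lemma repP n x : sumI (powI J n) A x -> powI J n (rep n x) /\ A (x - rep n x).
Proof.
move=> [a [b [ha hb ->]]].
apply: (epsilon_spec _ (fun r => powI J n r /\ A (a + b - r))).
by exists a; split; rewrite // addrC addKr.
Qed.

Lemma rep_mem n x : sumI (powI J n) A x -> sumI (powI J n) B (rep n x).
Proof. by move=> /repP [hr _]; exact: (sumI_l hB). Qed.

Lemma rep_inj n x y : sumI (powI J n) A x -> sumI (powI J n) A y ->
  sumI (powI J n.+1) A (x - y) <-> sumI (powI J n.+1) B (rep n x - rep n y).
Proof.
move=> /repP [px ix] /repP [py iy].
have -> : x - y = (rep n x - rep n y) + ((x - rep n x) - (y - rep n y)) by ring.
rewrite sumI_shift //; [|exact: powI_ideal | exact: (idealB hA)].
have hd := idealB (powI_ideal J n) px py.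
by split; apply: leading_subI_transfer.
Qed.

Lemma rep_surj n z : sumI (powI J n) B z ->
  exists x, sumI (powI J n) A x /\ sumI (powI J n.+1) B (rep n x - z).
Proof.
move=> [j [i' [hj hi' ->]]]; have hjA : sumI (powI J n) A j by exact: (sumI_l hA).
exists j; split => //; have [pj ij] := repP hjA.
have -> : rep n j - (j + i') = (rep n j - j) + (- i') by ring.
rewrite sumI_shift //; [|exact: powI_ideal | exact: (idealN hB)].
apply: hAB; split; first exact: (idealB (powI_ideal J n)).
by rewrite -opprB; exact: (idealN hA).
Qed.

Lemma rep_add n x y : sumI (powI J n) A x -> sumI (powI J n) A y ->
  sumI (powI J n.+1) B (rep n (x + y) - (rep n x + rep n y)).
Proof.
move=> hx hy; have hJn := powI_ideal J n.
have [px ix] := repP hx; have [py iy] := repP hy.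
have [pxy ixy] := repP (idealD (sumI_ideal hJn hA) hx hy).
apply: hAB; split; first exact: (idealB hJn pxy (idealD hJn px py)).
have -> : rep n (x + y) - (rep n x + rep n y) =
  (x - rep n x) + (y - rep n y) - (x + y - rep n (x + y)) by ring.
exact: (idealB hA (idealD hA ix iy) ixy).
Qed.

Lemma rep_mul k n x y : sumI (powI J k) A x -> sumI (powI J n) A y ->
  sumI (powI J (k + n).+1) B (rep (k + n) (x * y) - rep k x * rep n y).
Proof.
move=> /repP [px ix] /repP [py iy].
have hxy : A (x * y - rep k x * rep n y).
  have -> : x * y - rep k x * rep n y =
    y * (x - rep k x) + rep k x * (y - rep n y) by ring.
  exact: (idealD hA (idealM hA _ ix) (idealM hA _ iy)).
have hpxy := powI_mul px py.
have [pr ir] : powI J (k + n) (rep (k + n) (x * y)) /\ A (x * y - rep (k + n) (x * y)).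
  apply: repP; exists (rep k x * rep n y), (x * y - rep k x * rep n y).
  by split => //; rewrite addrCA subrr addr0.
apply: hAB; split; first exact: (idealB (powI_ideal J (k + n)) pr hpxy).
have -> : rep (k + n) (x * y) - rep k x * rep n y =
  (x * y - rep k x * rep n y) - (x * y - rep (k + n) (x * y)) by ring.
exact: (idealB hA hxy ir).
Qed.

Lemma rep_one : sumI (powI J 1) B (rep 0 1 - 1).
Proof.
have [_ i01] := @repP 0 1 (@sumI_l _ (powI J 0) A hA 1 I).
by apply: hAB; split => //; rewrite -opprB; exact: (idealN hA).
Qed.

Lemma gr_iso_of_leading : gr_iso J A B.
Proof.
exists rep; split; [exact: rep_mem | exact: rep_inj | exact: rep_surj | | exact: rep_one].
by split; [exact: rep_add | exact: rep_mul].
Qed.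

End GradedIso.

Theorem proposition4p7 (R : comNzRingType) (m J : R -> Prop) (f : seq R)
    (p c N : nat) :
  noetherian R -> local_ring m -> m_primary m J -> filter_regular m f ->
  hilbert_perturbation_index J f p -> ar_index J (idspan f) c ->
  N = maxn p c.+1 ->
  forall f' : seq R, size f' = size f ->
    (forall i, (i < size f)%N -> powI J N (f'`_i - f`_i)) ->
    gr_iso J (idspan f) (idspan f').
Proof.
move=> hN [hmax _] hprim _ [hpert _] [har _] -> f' hsz hdiff.
have hJ : is_ideal J by case: hprim.
have hI := idspan_ideal f; have hI' := idspan_ideal f'.
have hff' : leading_subI J (idspan f) (idspan f').
  apply: (leading_subI_AR hJ hI' har (leq_maxr p c.+1)).
  exact: idspan_perturb (powI_ideal J _) hsz hdiff.
apply: (gr_iso_of_leading hJ hI hI' hff').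
apply: (leading_subI_of_length hJ hI hI' _ _ hff') => k.
- exact: finite_length hN hmax hprim (sumI_ideal hI (powI_ideal J k)) (sumI_r hI).
- apply: hpert => // i hi.
  exact: powI_anti hJ (leq_maxl p c.+1) _ (hdiff i hi).
Qed.
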